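(* Let $A$ be a finite nonempty set, $f\in\mathrm{Op}(A)$ and let $\rho$ be a generalized quasiorder on $A$. Then $f$ preserves $\rho$ if and only if every translation $g\in\mathrm{trl}(f)$ preserves $\rho$. Consequently, $\mathrm{Pol}\,\rho=(\mathrm{End}\,\rho)^{*}$.
   Context: $\mathrm{Op}(A)$ is the set of all operations $f:A^n\to A$, $n\ge1$. An $n$-ary $f$ preserves an $m$-ary relation $\rho$ if for all $r_1,\dots,r_n\in\rho$ the tuple obtained by applying $f$ componentwise, $(f(r_1(1),\dots,r_n(1)),\dots,f(r_1(m),\dots,r_n(m)))$, lies in $\rho$. $\mathrm{Pol}\,\rho$ is the set of all operations preserving $\rho$, $\mathrm{End}\,\rho$ the set of unary ones. For $n$-ary $f$, a translation is a unary map $x\mapsto f(a_1,\dots,a_{i-1},x,a_{i+1},\dots,a_n)$ with fixed $a_j\in A$; $\mathrm{trl}(f)$ is the set of all translations (for unary $f$, $\mathrm{trl}(f)=\{f\}$). For $M\subseteq A^A$, $M^*:=\{f\in\mathrm{Op}(A)\mid\mathrm{trl}(f)\subseteq M\}$. An $m$-ary relation $\rho$ is a generalized quasiorder if it is reflexive ($(a,\dots,a)\in\rho$ for all $a$) and transitive: for every $m\times m$-matrix $(a_{ij})$ over $A$ all of whose rows and columns belong to $\rho$, the diagonal $(a_{11},\dots,a_{mm})$ belongs to $\rho$. *)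

From mathcomp Require Import all_boot.
Set Implicit Arguments. Unset Strict Implicit. Unset Printing Implicit Defensive.

Definition relation (A : finType) (m : nat) := {set {ffun 'I_m -> A}}.

Definition preserves (A : finType) (n m : nat) (f : {ffun 'I_n -> A} -> A)
  (rho : relation A m) : Prop :=
  forall r : 'I_n -> {ffun 'I_m -> A},
    (forall j, r j \in rho) -> [ffun i => f [ffun j => r j i]] \in rho.

Definition unary_op (A : finType) (g : A -> A) : {ffun 'I_1 -> A} -> A :=
  fun x => g (x ord0).

Definition End_rel (A : finType) (m : nat) (rho : relation A m) (g : A -> A) : Prop :=
  preserves (unary_op g) rho.

Definition is_trl (A : finType) (n : nat) (f : {ffun 'I_n -> A} -> A) (g : A -> A) : Prop :=
  exists (i : 'I_n) (a : {ffun 'I_n -> A}),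
    forall x, g x = f [ffun j => if j == i then x else a j].

(* Op(A): operations of arity n >= 1, arity written as n.+1. *)
Definition Op (A : finType) := {n : nat & {ffun 'I_n.+1 -> A} -> A}.

Definition Pol (A : finType) (m : nat) (rho : relation A m) (F : Op A) : Prop :=
  preserves (projT2 F) rho.

Definition star (A : finType) (M : (A -> A) -> Prop) (F : Op A) : Prop :=
  forall g, is_trl (projT2 F) g -> M g.

Definition reflexive_rel (A : finType) (m : nat) (rho : relation A m) : Prop :=
  forall a : A, [ffun _ : 'I_m => a] \in rho.

Definition transitive_rel (A : finType) (m : nat) (rho : relation A m) : Prop :=
  forall M : 'I_m -> 'I_m -> A,
    (forall i, [ffun j => M i j] \in rho) ->
    (forall j, [ffun i => M i j] \in rho) ->
    [ffun i => M i i] \in rho.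

Definition gen_quasiorder (A : finType) (m : nat) (rho : relation A m) : Prop :=
  reflexive_rel rho /\ transitive_rel rho.

From mathcomp Require Import all_boot.
Set Implicit Arguments. Unset Strict Implicit. Unset Printing Implicit Defensive.

(* A translation of f is f with all but one argument held at constant tuples,
   which lie in rho by reflexivity; so every translation of a polymorphism is
   an endomorphism.  Conversely, let the arguments of f run through tuples of
   rho one at a time.  If the first k arguments already run through tuples of
   rho and the others are constants, then letting argument k run through its
   tuple as well gives an m x m matrix whose rows lie in rho (they are
   images under a translation) and whose columns lie in rho (by induction on
   k); transitivity puts its diagonal, the next stage, in rho. *)

Section Translations.

Variables (A : finType) (m n : nat) (rho : relation A m).
Variable f : {ffun 'I_n -> A} -> A.

Definition upd (a : {ffun 'I_n -> A}) (i : 'I_n) (x : A) : {ffun 'I_n -> A} :=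
  [ffun j : 'I_n => if j == i then x else a j].

Definition splice (k : nat) (r : 'I_n -> {ffun 'I_m -> A})
    (a : {ffun 'I_n -> A}) (l : 'I_m) : {ffun 'I_n -> A} :=
  [ffun j : 'I_n => if (j < k)%N then r j l else a j].

Lemma splice0 r a l : splice 0 r a l = a.
Proof. by apply/ffunP=> j; rewrite ffunE. Qed.

Lemma splice_full r a l : splice n r a l = [ffun j => r j l].
Proof. by apply/ffunP=> j; rewrite !ffunE ltn_ord. Qed.

Lemma splice_upd k r a (i : 'I_n) x l : i = k :> nat ->
  splice k r (upd a i x) l = upd (splice k r a l) i x.
Proof.
move=> ik; apply/ffunP=> j; rewrite !ffunE.
by case: eqP => [->|_]; rewrite ?ik ?ltnn.
Qed.

Lemma spliceS k r a (i : 'I_n) l : i = k :> nat ->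
  splice k.+1 r a l = upd (splice k r a l) i (r i l).
Proof.
move=> ik; apply/ffunP=> j; rewrite !ffunE ltnS leq_eqVlt.
have -> : (j == k :> nat) = (j == i) by rewrite -ik.
by case: eqP => [->|].
Qed.

Lemma End_relP (g : A -> A) :
  End_rel rho g <-> forall t, t \in rho -> [ffun l => g (t l)] \in rho.
Proof.
split=> [gP t tP | gP r rP].
  by have := gP (fun=> t) (fun=> tP); rewrite /unary_op; under eq_ffun do rewrite ffunE.
by rewrite /unary_op; under eq_ffun do rewrite ffunE; exact: gP (rP ord0).
Qed.

Hypothesis rho_refl : reflexive_rel rho.

Lemma trl_End_rel g : preserves f rho -> is_trl f g -> End_rel rho g.
Proof.
move=> fP [i [a gE]]; apply/End_relP=> t tP.
pose r j := if j == i then t else [ffun=> a j].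
have rP j : r j \in rho by rewrite /r; case: eqP => _; [exact: tP | exact: rho_refl].
have := fP r rP; congr (_ \in rho); apply/ffunP=> l; rewrite !ffunE gE.
by congr f; apply/ffunP=> j; rewrite !ffunE /r; case: eqP; rewrite ?ffunE.
Qed.

Hypothesis rho_trans : transitive_rel rho.
Hypothesis trlP : forall g, is_trl f g -> End_rel rho g.

Lemma splice_in_rho r : (forall j, r j \in rho) ->
  forall k, (k <= n)%N -> forall a, [ffun l => f (splice k r a l)] \in rho.
Proof.
move=> rP; elim=> [_ a | k IHk kn a].
  by under eq_ffun do rewrite splice0; exact: rho_refl.
pose i := Ordinal kn.
pose M p l := f (upd (splice k r a p) i (r i l)).
have rowsP p : [ffun l => M p l] \in rho.
  have /End_relP trl_p : End_rel rho (fun x => f (upd (splice k r a p) i x)).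
    by apply: trlP; exists i, (splice k r a p).
  exact: trl_p (rP i).
have colsP l : [ffun p => M p l] \in rho.
  rewrite /M; under eq_ffun do rewrite -splice_upd //.
  exact: IHk (ltnW kn) _.
under eq_ffun => l do rewrite (@spliceS k r a i l erefl).
exact: rho_trans rowsP colsP.
Qed.

Lemma trl_preserves (x0 : A) : preserves f rho.
Proof.
move=> r rP; have := splice_in_rho rP (leqnn n) [ffun=> x0].
by under eq_ffun do rewrite splice_full.
Qed.

End Translations.

Lemma preserves_iff_trl (A : finType) (x0 : A) (n m : nat) (rho : relation A m)
    (f : {ffun 'I_n -> A} -> A) :
  gen_quasiorder rho ->
  preserves f rho <-> (forall g, is_trl f g -> End_rel rho g).
Proof.
case=> rho_refl rho_trans; split=> [fP g | trlP]; first exact: trl_End_rel.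
exact: trl_preserves.
Qed.

Theorem theorem3p7 (A : finType) (hA : 0 < #|A|) (m : nat) (rho : relation A m)
  (hrho : gen_quasiorder rho) :
  (forall (n : nat) (f : {ffun 'I_n.+1 -> A} -> A),
     preserves f rho <-> (forall g, is_trl f g -> End_rel rho g)) /\
  (forall F : Op A, Pol rho F <-> star (End_rel rho) F).
Proof.
have [x0 _] := card_gt0P hA.
split=> [n f | [n f]]; exact: preserves_iff_trl.
Qed.
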